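(* Let $\kappa=\frac4{27}$. For every positive integer $n$ and every $x$, $$\frac{(n+1)(3n+2)x}{6\kappa}\,{}_3F_2\left[\begin{matrix}-n,\frac{n+3}2,\frac{n+2}2\\ \frac43,\frac53\end{matrix};x\right]+{}_3F_2\left[\begin{matrix}-n-1,\frac{n+2}2,\frac{n+1}2\\ \frac13,\frac23\end{matrix};x\right]-{}_3F_2\left[\begin{matrix}-n,\frac{n+1}2,\frac n2\\ \frac13,\frac23\end{matrix};x\right]=0,$$ $$\frac{(n+1)(n+2)x}{2\kappa}\,{}_3F_2\left[\begin{matrix}-n,\frac{n+4}2,\frac{n+3}2\\ \frac43,\frac53\end{matrix};x\right]+{}_3F_2\left[\begin{matrix}-n-1,\frac{n+2}2,\frac{n+3}2\\ \frac13,\frac23\end{matrix};x\right]-{}_3F_2\left[\begin{matrix}-n,\frac{n+1}2,\frac{n+2}2\\ \frac13,\frac23\end{matrix};x\right]=0.$$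
   Context: ${}_3F_2\left[\begin{matrix}a_1,a_2,a_3\\ b_1,b_2\end{matrix};x\right]=\sum_{k\ge0}\frac{(a_1)_k(a_2)_k(a_3)_k}{(b_1)_k(b_2)_k}\frac{x^k}{k!}$, $(x)_k=x(x+1)\cdots(x+k-1)$, $(x)_0=1$; with $a_1$ a nonpositive integer these are polynomials in $x$. *)

From mathcomp Require Import all_boot all_order all_algebra.
Set Implicit Arguments. Unset Strict Implicit. Unset Printing Implicit Defensive.
Import Order.TTheory GRing.Theory Num.Theory.
Local Open Scope ring_scope.

Definition poch (R : fieldType) (a : R) (k : nat) : R :=
  \prod_(i < k) (a + i%:R).

(* Terminating 3F2 with first numerator parameter a1 = -m (m : nat):
   3F2[-m, a2, a3; b1, b2; x] = sum_{k >= 0} (-m)_k (a2)_k (a3)_k / ((b1)_k (b2)_k) x^k / k!.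
   Since (-m)_k = 0 for k > m, the series is the finite sum over k = 0..m. *)
Definition F32neg (R : fieldType) (m : nat) (a2 a3 b1 b2 x : R) : R :=
  \sum_(k < m.+1)
    (poch (- m%:R) k * poch a2 k * poch a3 k) / (poch b1 k * poch b2 k)
      * x ^+ k / (k`!)%:R.

From mathcomp Require Import all_boot all_order all_algebra.
From mathcomp Require Import ring.
Import Order.TTheory GRing.Theory Num.Theory.
Local Open Scope ring_scope.

(* Both identities are instances of one contiguous relation in the first
   numerator parameter,
     3F2[-m-1, p, q+1; c, d; x] - 3F2[-m, p, q; c, d; x]
       = - p (q+m+1) / (c d) * x * 3F2[-m, p+1, q+1; c+1, d+1; x],
   taken at p = (n+1)/2, q = n/2 and at p = (n+2)/2, q = (n+1)/2, with
   c = 1/3, d = 2/3; the value kappa = 4/27 is exactly what makes the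
   constants agree.  The relation is checked coefficientwise: after factoring
   out the common Pochhammer products, the coefficients of x^(k+1) differ by
   (-m-1)(q+k+1) - (k-m) q = -(k+1)(q+m+1). *)

Section Contiguity.
Context {R : numFieldType}.
Implicit Types (a p q c d x : R) (m k : nat).

Lemma pochS a k : poch a k.+1 = a * poch (a + 1) k.
Proof.
rewrite /poch big_ord_recl /= addr0; congr (_ * _).
by apply: eq_bigr => i _; rewrite /bump /= -natr1; ring.
Qed.

Lemma pochSr a k : poch a k.+1 = poch a k * (a + k%:R).
Proof. by rewrite /poch big_ord_recr. Qed.

Definition F32neg_coef m p q c d k : R :=
  poch (- m%:R) k * poch p k * poch q k / (poch c k * poch d k) / (k`!)%:R.

Lemma F32neg_coef0 m p q c d : F32neg_coef m p q c d 0 = 1.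
Proof. by rewrite /F32neg_coef /poch !big_ord0 !mul1r invr1 mulr1. Qed.

Lemma F32neg_coef_last m p q c d : F32neg_coef m p q c d m.+1 = 0.
Proof. by rewrite /F32neg_coef pochSr addNr !mulr0 !mul0r. Qed.

(* No hypothesis on c, d: (c)_(k+1)^-1 = c^-1 (c+1)_k^-1 holds in any field,
   even when c (c+1)_k = 0. *)
Lemma F32neg_coef_contiguous m p q c d k :
  F32neg_coef m.+1 p (q + 1) c d k.+1 - F32neg_coef m p q c d k.+1
  = - (p * (q + m%:R + 1) / (c * d))
      * F32neg_coef m (p + 1) (q + 1) (c + 1) (d + 1) k.
Proof.
have shift : poch (- m.+1%:R : R) k.+1 = - m.+1%:R * poch (- m%:R) k.
  by rewrite pochS -natr1 opprD addrNK.
have numerator : (q + m%:R + 1) * k.+1%:R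
    = (- m%:R + k%:R) * q - (- m.+1%:R) * (q + 1 + k%:R) :> R.
  by rewrite -!natr1; ring.
have k1 : k.+1%:R != 0 :> R by rewrite pnatr_eq0.
rewrite /F32neg_coef shift [poch (- m%:R) k.+1]pochSr [poch (q + 1) k.+1]pochSr.
rewrite !pochS.
rewrite factS natrM !invfM.
by rewrite -[q + m%:R + 1](mulfK k1) numerator; ring.
Qed.

Lemma F32negC m p q c d x : F32neg m p q c d x = F32neg m q p c d x.
Proof.
by apply: eq_bigr => k _; congr (_ / _ * _ / _); rewrite mulrAC.
Qed.

Lemma F32negE m p q c d x :
  F32neg m p q c d x = \sum_(k < m.+1) F32neg_coef m p q c d k * x ^+ k.
Proof. by apply: eq_bigr => k _; rewrite /F32neg_coef mulrAC. Qed.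

Lemma F32neg_contiguous m p q c d x :
  F32neg m.+1 p (q + 1) c d x - F32neg m p q c d x
  = - (p * (q + m%:R + 1) / (c * d)) * x
      * F32neg m (p + 1) (q + 1) (c + 1) (d + 1) x.
Proof.
have -> : F32neg m p q c d x = \sum_(k < m.+2) F32neg_coef m p q c d k * x ^+ k.
  by rewrite F32negE [RHS]big_ord_recr /= F32neg_coef_last mul0r addr0.
rewrite F32negE big_ord_recl [X in _ - X]big_ord_recl !F32neg_coef0.
rewrite opprD addrACA subrr add0r.
rewrite -sumrB F32negE mulr_sumr.
apply: eq_bigr => i _; rewrite lift0 -mulrBl F32neg_coef_contiguous exprS; ring.
Qed.

End Contiguity.

Theorem proposition7 (R : numFieldType) (n : nat) (x : R) :
  (0 < n)%N ->
  let kappa : R := 4 / 27 in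
  let N : R := n%:R in
  ((N + 1) * (3 * N + 2) * x / (6 * kappa)
      * F32neg n ((N + 3) / 2) ((N + 2) / 2) (4 / 3) (5 / 3) x
    + F32neg n.+1 ((N + 2) / 2) ((N + 1) / 2) (1 / 3) (2 / 3) x
    - F32neg n ((N + 1) / 2) (N / 2) (1 / 3) (2 / 3) x = 0)
  /\
  ((N + 1) * (N + 2) * x / (2 * kappa)
      * F32neg n ((N + 4) / 2) ((N + 3) / 2) (4 / 3) (5 / 3) x
    + F32neg n.+1 ((N + 2) / 2) ((N + 3) / 2) (1 / 3) (2 / 3) x
    - F32neg n ((N + 1) / 2) ((N + 2) / 2) (1 / 3) (2 / 3) x = 0).
Proof.
(* The identities also hold for n = 0. *)
move=> _ kappa N.
have four_thirds : 1 / 3 + 1 = 4 / 3 :> R by field.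
have five_thirds : 2 / 3 + 1 = 5 / 3 :> R by field.
split.
- have := F32neg_contiguous n ((N + 1) / 2) (N / 2) (1 / 3) (2 / 3) x.
  have -> : N / 2 + 1 = (N + 2) / 2 by field.
  have -> : (N + 1) / 2 + 1 = (N + 3) / 2 by field.
  rewrite four_thirds five_thirds [F32neg n.+1 _ _ _ _ _]F32negC => E.
  by rewrite -addrA E /kappa /N; field.
- have := F32neg_contiguous n ((N + 2) / 2) ((N + 1) / 2) (1 / 3) (2 / 3) x.
  have -> : (N + 1) / 2 + 1 = (N + 3) / 2 by field.
  have -> : (N + 2) / 2 + 1 = (N + 4) / 2 by field.
  rewrite four_thirds five_thirds [F32neg n _ _ _ _ _]F32negC => E.
  by rewrite -addrA E /kappa /N; field.
Qed.
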